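(* Let $p$ be a prime with $p\equiv 3\pmod 4$. Then for every pattern $w\in\{r,n\}^3$ of length $3$, the number of occurrences of $w$ in $\mathbb{Z}_p$ is either $\lfloor\frac{p-3}{8}\rfloor$ or $\lceil\frac{p-3}{8}\rceil$.
   Context: An element $x\in\mathbb{Z}_p\setminus\{0\}$ is a quadratic residue (denoted $r$) if $x\equiv y^2\pmod p$ for some integer $y$, and a nonresidue (denoted $n$) otherwise. For a word $w=w_0w_1\cdots w_{k-1}\in\{r,n\}^k$ (a pattern of length $k$), an occurrence of $w$ in $\mathbb{Z}_p$ is an element $a\in\mathbb{Z}_p$ such that the $k$ consecutive elements $a,a+1,\dots,a+(k-1)$ (computed in $\mathbb{Z}_p$) are all nonzero and, for each $0\le i\le k-1$, $a+i$ is a quadratic residue if $w_i=r$ and a nonresidue if $w_i=n$. The number of occurrences of $w$ is the number of such $a$. *)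

From mathcomp Require Import all_boot.
Set Implicit Arguments. Unset Strict Implicit. Unset Printing Implicit Defensive.

(* Elements of Z_p are represented by naturals, reduced mod p. *)
Definition qr (p x : nat) : bool :=
  (x %% p != 0) && [exists y : 'I_p, (y * y) %% p == x %% p].

(* A pattern is a word over {r, n}, encoded as seq bool (true = r, false = n). *)
Definition is_occurrence (p : nat) (w : seq bool) (a : nat) : bool :=
  all (fun i => ((a + i) %% p != 0) && (qr p (a + i) == nth false w i))
      (iota 0 (size w)).

Definition num_occ (p : nat) (w : seq bool) : nat :=
  #|[pred a : 'I_p | is_occurrence p w a]|.

From mathcomp Require Import all_boot all_algebra finfield.
From mathcomp Require Import zify ring.
Set Implicit Arguments. Unset Strict Implicit. Unset Printing Implicit Defensive.
Import GRing.Theory Num.Theory.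

(* Let chi be the quadratic character of a finite field F of order q = 3 mod 4.
   For y <> 0, 1 + e chi(y) (e = +-1) is twice the indicator that y is a residue
   (e = 1) or a nonresidue (e = -1), so for x outside {0, -1, -2} the product
   prod_i (1 + e_i chi(x + i)) is 8 if x starts an occurrence of the pattern with
   signs e_i, and 0 otherwise.  Expanding the sum over x of this product needs
   sum chi = 0, sum chi(x) chi(x + k) = -1 for k <> 0 (the conic z^2 = y^2 + k has
   q - 1 points, being isomorphic to uv = k) and sum chi(x) chi(x + 1) chi(x + 2) = 0,
   since x |-> -x - 2 reverses the triple and chi is odd (-1 is a nonresidue).
   Removing the three boundary terms leaves 8 N = q - 3 - (1 + chi(2)) D with
   D = +-2, so 8 N is q - 7, q - 3 or q + 1. *)

Local Open Scope ring_scope.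

Lemma sum_shift (V : finZmodType) (M : nmodType) (f : V -> M) (c : V) :
  \sum_x f (x + c) = \sum_x f x.
Proof. by rewrite [RHS](reindex_inj (addIr c)). Qed.

Definition letter_sign (b : bool) : int := if b then 1 else -1.

Section QuadraticCharacter.

Variable F : finFieldType.

Definition is_square (x : F) : bool := [exists y, y * y == x].

Definition qchar (x : F) : int := if x == 0 then 0 else if is_square x then 1 else -1.

Definition sqrts (x : F) : {set F} := [set y | y * y == x].

Lemma qchar0 : qchar 0 = 0.
Proof. by rewrite /qchar eqxx. Qed.

Lemma qchar1 : qchar 1 = 1.
Proof.
by rewrite /qchar oner_eq0 (_ : is_square 1) //; apply/existsP; exists 1; rewrite mulr1.
Qed.

Lemma qchar_unit x : x != 0 -> qchar x = 1 \/ qchar x = -1.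
Proof. by rewrite /qchar => /negbTE ->; case: is_square; [left | right]. Qed.

Lemma sum_card_sqrts : (\sum_x #|sqrts x|)%N = #|F|.
Proof.
rewrite -[RHS]sum1_card [RHS](partition_big (fun y => y * y) predT) //=.
by apply: eq_bigr => x _; rewrite sum1dep_card; apply: eq_card => y; rewrite !inE.
Qed.

Lemma card_pairs_mul k : k != 0 ->
  #|[set q : F * F | q.1 * q.2 == k]| = #|F|.-1.
Proof.
move=> k0; have inj_f : injective (fun u : F => (u, k / u)) by move=> u v [].
rewrite -(cardsC1 0) -(card_imset _ inj_f); apply: eq_card => -[u v].
rewrite inE /=; apply/eqP/imsetP => [uv_k | [x x0 [-> ->]]].
  have u0 : u != 0 by apply: contra_eq_neq uv_k => ->; rewrite mul0r eq_sym.
  by exists u; rewrite ?inE // -uv_k mulrC mulKf.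
by rewrite mulrC divfK // -in_setC1.
Qed.

Lemma sum_card_sqrts_shift k :
  (\sum_x #|sqrts x| * #|sqrts (x + k)%R|)%N =
  #|[set q : F * F | q.2 * q.2 == q.1 * q.1 + k]|.
Proof.
rewrite -sum1dep_card (partition_big (fun q => q.1 * q.1) predT) //=.
apply: eq_bigr => x _; rewrite sum1dep_card -cardsX; apply: eq_card => -[y z].
by rewrite !inE /=; case: (y * y =P x) => [->|_]; rewrite ?andbT ?andbF.
Qed.

Hypothesis two_neq0 : (2%:R : F) != 0.

Lemma oppr_eq_self (x : F) : (- x == x) = (x == 0).
Proof.
by rewrite eq_sym -addr_eq0 -mulr2n -(mulr_natr x) mulf_eq0 (negbTE two_neq0) orbF.
Qed.

Lemma card_pairs_sqr_sub k :
  #|[set q : F * F | q.2 * q.2 == q.1 * q.1 + k]| =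
  #|[set q : F * F | q.1 * q.2 == k]|.
Proof.
pose g (q : F * F) := (q.2 - q.1, q.2 + q.1).
have gK : cancel g (fun q => ((q.2 - q.1) / 2%:R, (q.2 + q.1) / 2%:R)).
  by move=> [y z]; congr pair; rewrite /g /=; field.
rewrite -[RHS](card_preimset _ (can_inj gK)); apply: eq_card => -[y z].
by rewrite !inE /= (_ : (z - y) * (z + y) = z * z - y * y) ?subr_eq 1?addrC //; ring.
Qed.

Lemma card_sqrts x : (#|sqrts x|%:R : int) = 1 + qchar x.
Proof.
rewrite /qchar; have [->|x0] := eqVneq x 0.
  suff -> : sqrts 0 = [set 0] by rewrite cards1.
  by apply/setP => y; rewrite !inE mulf_eq0 orbb.
case: ifP => [/existsP[y /eqP yy] | nsq]; last first.
  suff -> : sqrts x = set0 by rewrite cards0.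
  apply/setP => y; rewrite !inE; apply: contraFF nsq => yyx.
  by apply/existsP; exists y.
have y0 : y != 0 by apply: contraNneq x0 => y0; rewrite -yy y0 mul0r.
suff -> : sqrts x = [set y; - y].
  by rewrite cards2 eq_sym oppr_eq_self y0.
apply/setP => t; rewrite !inE -yy -subr_eq0 -!expr2 subr_sqr.
by rewrite mulf_eq0 subr_eq0 addr_eq0.
Qed.

Lemma sum_qchar : \sum_x qchar x = 0.
Proof.
have := congr1 (fun n => n%:R : int) sum_card_sqrts; rewrite /= natr_sum.
under eq_bigr do rewrite card_sqrts.
by rewrite big_split sumr_const -[X in _ = X]addr0 => /addrI.
Qed.

Lemma sum_qchar_mul_shift k : k != 0 -> \sum_x qchar x * qchar (x + k) = -1.
Proof.
move=> k0; have := congr1 (fun n => n%:R : int) (sum_card_sqrts_shift k).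
rewrite card_pairs_sqr_sub card_pairs_mul // natr_sum /=.
have expand x : (#|sqrts x| * #|sqrts (x + k)|)%:R =
    1 + qchar x + qchar (x + k) + qchar x * qchar (x + k) :> int.
  by rewrite natrM !card_sqrts; ring.
under eq_bigr do rewrite expand.
rewrite !big_split /= sum_qchar (sum_shift qchar) sum_qchar sumr_const.
rewrite -(ltn_predK (finNzRing_gt1 F)) mulrSr !addr0 -addrA -[X in _ = X]addr0.
by move=> /addrI /eqP; rewrite addrC addr_eq0 => /eqP.
Qed.

Hypothesis card_mod4 : (#|F| %% 4 = 3)%N.

Lemma neg1_nonsquare : ~~ is_square (-1).
Proof.
apply/existsP => -[y /eqP yy].
have y0 : y != 0 by apply: contra_eq_neq yy => ->; rewrite mul0r eq_sym oppr_eq0 oner_eq0.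
have y2 : y ^+ 2 = -1 by rewrite expr2.
have y4 : y ^+ 4 = 1 by rewrite (exprM y 2 2) y2 sqrrN expr1n.
have := expf_card y; rewrite (divn_eq #|F| 4) card_mod4 exprD mulnC exprM y4 expr1n.
by rewrite mul1r exprS y2 mulrN1 => /eqP; rewrite oppr_eq_self (negbTE y0).
Qed.

Lemma qcharN x : qchar (- x) = - qchar x.
Proof.
(* z and -z are never both squares, so d is nonnegative; its sum vanishes. *)
pose d z := - (qchar z + qchar (- z)).
have d_ge0 z : 0 <= d z.
  rewrite /d /qchar oppr_eq0; case: eqP => // /eqP z0.
  case sz: (is_square z); case snz: (is_square (- z)) => //.
  case/negP: neg1_nonsquare; case/existsP: sz => y /eqP yz.
  case/existsP: snz => t /eqP tz; apply/existsP; exists (t / y).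
  by rewrite mulrACA -invfM tz yz mulNr divff.
have sum_d : \sum_z d z = 0.
  have := sum_qchar; rewrite (reindex_inj (@oppr_inj F)) /= => sumN.
  by rewrite /d sumrN big_split /= sum_qchar sumN addr0 oppr0.
have /eqP := psumr_eq0P (fun z _ => d_ge0 z) sum_d (i := x) isT.
by rewrite oppr_eq0 addrC addr_eq0 => /eqP.
Qed.

Lemma sum_qchar_mul3 : \sum_x qchar x * qchar (x + 1) * qchar (x + 2%:R) = 0.
Proof.
set T := \sum_x _.
have reflect_inj : injective (fun x : F => - x - 2%:R) by move=> x y /addIr /oppr_inj.
suff : T = - T by lia.
rewrite {1}/T (reindex_inj reflect_inj) -sumrN; apply: eq_bigr => x _ /=.
rewrite (_ : - x - 2%:R = - (x + 2%:R)); last by ring.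
rewrite (_ : - (x + 2%:R) + 1 = - (x + 1)); last by ring.
rewrite (_ : - (x + 2%:R) + 2%:R = - x); last by ring.
by rewrite !qcharN; ring.
Qed.

Definition occurs (w : seq bool) (x : F) : bool :=
  all (fun i => (x + i%:R != 0) && (is_square (x + i%:R) == nth false w i))
      (iota 0 (size w)).

Lemma qchar_indicator b y :
  y != 0 -> 1 + letter_sign b * qchar y = 2 * (is_square y == b)%:R.
Proof. by rewrite /qchar => /negbTE ->; case: is_square; case: b. Qed.

Definition occ_weight (b0 b1 b2 : bool) (x : F) : int :=
  (1 + letter_sign b0 * qchar x) * (1 + letter_sign b1 * qchar (x + 1))
  * (1 + letter_sign b2 * qchar (x + 2%:R)).

Lemma occ_weightE b0 b1 b2 x : x != 0 -> x != -1 -> x != - 2%:R ->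
  occ_weight b0 b1 b2 x = if occurs [:: b0; b1; b2] x then 8 else 0.
Proof.
rewrite -!addr_eq0 => x0 x1 x2; rewrite /occ_weight /occurs /= addr0 x0 x1 x2.
rewrite !qchar_indicator //.
by case: (is_square x == b0); case: (is_square (x + 1) == b1);
  case: (is_square (x + 2%:R) == b2).
Qed.

Lemma sum_occ_weight b0 b1 b2 :
  \sum_x occ_weight b0 b1 b2 x = #|F|%:R
    - (letter_sign b0 * letter_sign b1 + letter_sign b0 * letter_sign b2
       + letter_sign b1 * letter_sign b2).
Proof.
set s0 := letter_sign b0; set s1 := letter_sign b1; set s2 := letter_sign b2.
have expand x : occ_weight b0 b1 b2 x =
    1 + s0 * qchar x + s1 * qchar (x + 1) + s2 * qchar (x + 2%:R)
    + s0 * s1 * (qchar x * qchar (x + 1))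
    + s0 * s2 * (qchar x * qchar (x + 2%:R))
    + s1 * s2 * (qchar (x + 1) * qchar (x + 2%:R))
    + s0 * s1 * s2 * (qchar x * qchar (x + 1) * qchar (x + 2%:R)).
  by rewrite /occ_weight; ring.
have shift12 : \sum_x qchar (x + 1) * qchar (x + 2%:R) = -1.
  rewrite -(sum_qchar_mul_shift (oner_neq0 F)).
  rewrite -[RHS](sum_shift (fun y => qchar y * qchar (y + 1)) 1).
  by apply: eq_bigr => x _; rewrite /= -addrA.
rewrite (eq_bigr _ (fun x _ => expand x)) !big_split /= -!mulr_sumr.
rewrite !(sum_shift qchar) sum_qchar sum_qchar_mul3 shift12.
rewrite (sum_qchar_mul_shift (oner_neq0 F)) (sum_qchar_mul_shift two_neq0) sumr_const.
ring.
Qed.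

Lemma card_occurs_weight b0 b1 b2 :
  8 *+ #|[set x | occurs [:: b0; b1; b2] x]| = \sum_x occ_weight b0 b1 b2 x
    - occ_weight b0 b1 b2 0 - occ_weight b0 b1 b2 (-1) - occ_weight b0 b1 b2 (- 2%:R).
Proof.
have n1 : (-1 : F) != 0 by rewrite oppr_eq0 oner_eq0.
have n2 : (- 2%:R : F) != 0 by rewrite oppr_eq0.
have n21 : (- 2%:R : F) != -1.
  by rewrite eqr_opp (_ : 2%:R = 1 + 1 :> F) // -subr_eq0 addrK oner_eq0.
rewrite (bigD1 0) // (bigD1 (-1)) //= (bigD1 (- 2%:R)) /=; last by rewrite n21 n2.
set rest := \sum_(i | _) _; suff -> : rest = 8 *+ #|[set x | occurs [:: b0; b1; b2] x]|.
  by ring.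
rewrite /rest (eq_bigr (fun x => if occurs [:: b0; b1; b2] x then 8 else 0)); last first.
  by move=> x /andP[/andP[x0 x1] x2]; rewrite occ_weightE.
rewrite -big_mkcondr -[RHS](sumr_const _ (8 : int)) /=.
apply: eq_bigl => x; rewrite inE; apply/andb_idl.
rewrite /occurs /= addr0 -!(addr_eq0 x).
by case/and4P => /andP[-> _] /andP[-> _] /andP[-> _].
Qed.

Lemma card_occurs3 b0 b1 b2 :
  8 *+ #|[set x | occurs [:: b0; b1; b2] x]| =
  #|F|%:R - 3 - (1 + qchar 2%:R) * (letter_sign b2 - letter_sign b0
    + letter_sign b0 * letter_sign b1 + letter_sign b1 * letter_sign b2).
Proof.
rewrite card_occurs_weight sum_occ_weight /occ_weight.
rewrite (_ : -1 + 2%:R = 1 :> F); last by ring.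
rewrite (_ : - 2%:R + 1 = -1 :> F); last by ring.
by rewrite !add0r !addNr !qcharN qchar0 qchar1; ring.
Qed.

Lemma card_occurs3_round b0 b1 b2 :
  #|[set x | occurs [:: b0; b1; b2] x]| = ((#|F| - 3) %/ 8)%N \/
  #|[set x | occurs [:: b0; b1; b2] x]| = ((#|F| - 3 + 7) %/ 8)%N.
Proof.
have := card_occurs3 b0 b1 b2.
by have [->|->] := qchar_unit two_neq0; case: b0; case: b1; case: b2 => /=; lia.
Qed.

End QuadraticCharacter.

Section PrimeField.

Variable p : nat.
Hypothesis p_prime : prime p.

Lemma natr_Fp_eq0 n : ((n%:R : 'F_p) == 0) = (n %% p == 0)%N.
Proof. by rewrite -(dvdn_pcharf (pchar_Fp p_prime)). Qed.

Lemma is_square_Fp n :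
  is_square (n%:R : 'F_p) = [exists y : 'I_p, (y * y) %% p == n %% p]%N.
Proof.
transitivity [exists y : 'F_p, (val y * val y) %% p == n %% p]%N; last first.
  by rewrite Fp_cast.
apply: eq_existsb => y; rewrite -[y in y * _]natr_Zp -[y in _ * y]natr_Zp -natrM.
by rewrite -(inj_eq val_inj) /= !val_Fp_nat.
Qed.

Lemma is_occurrence_Fp w n : is_occurrence p w n = occurs w (n%:R : 'F_p).
Proof.
apply: eq_all => i; rewrite -natrD /qr is_square_Fp -natr_Fp_eq0.
by case: eqP.
Qed.

Lemma num_occ_Fp w : num_occ p w = #|[set x : 'F_p | occurs w x]|.
Proof.
transitivity #|[pred x : 'F_p | is_occurrence p w (val x)]|; first by rewrite Fp_cast.
by apply: eq_card => x; rewrite !inE /= is_occurrence_Fp natr_Zp.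
Qed.

End PrimeField.

Local Close Scope ring_scope.

Theorem corollary2p5 (p : nat) (w : seq bool) :
  prime p -> p %% 4 = 3 -> size w = 3 ->
  num_occ p w = (p - 3) %/ 8 \/ num_occ p w = (p - 3 + 7) %/ 8.
Proof.
move=> p_prime p_mod4; case: w => [|b0 [|b1 [|b2 []]]] // _.
have two_neq0 : (2%:R : 'F_p)%R != 0%R by rewrite natr_Fp_eq0 // modn_small; lia.
have card_mod4 : #|'F_p| %% 4 = 3 by rewrite card_Fp.
rewrite num_occ_Fp //.
by have := card_occurs3_round two_neq0 card_mod4 b0 b1 b2; rewrite card_Fp.
Qed.
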